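(* Let $M$ be a simple extended matrix with $n\geq 1$ rows, $m\geq 0$ left columns and $k\geq 1$ variables, $$M=\left[ \begin{array}{ccc|c} x_{11} & \cdots & x_{1m} & y_{1}\\ \vdots & & \vdots & \vdots\\ x_{n1} & \cdots & x_{nm} & y_{n}\end{array} \right],$$ and let $n',k'\geq 2$ be integers. Then $M\Rightarrow_{\mathsf{lex}} \mathsf{Cube}_{n',k'}$ holds if and only if there exist indices $i_1,\dots,i_{n'}\in\{1,\dots,n\}$ (not necessarily distinct) such that there is no $j\in\{1,\dots,m\}$ with $x_{i_a j}=y_{i_a}$ for every $a\in\{1,\dots,n'\}$.
   Context: A simple extended matrix $M$ (with parameters $n\geq 1$, $m\geq 0$, $k\geq 1$) is an $n\times(m+1)$ array as displayed, whose entries $x_{ij}$ ($1\le i\le n$, $1\le j\le m$) and $y_i$ are (not necessarily distinct) variables from $\{x_1,\dots,x_k\}$; the first $m$ columns are the left columns and the last column is the right column. Let $\mathbb{C}$ be a finitely complete category. An internal $n$-ary relation is a monomorphism $r\colon R\rightarrowtail A^n$. It is $M$-closed if for every object $B$ and every function $f\colon\{x_1,\dots,x_k\}\to\mathbb{C}(B,A)$ such that, for each $j\in\{1,\dots,m\}$, the induced morphism $(f(x_{1j}),\dots,f(x_{nj}))\colon B\to A^n$ factors through $r$, the morphism $(f(y_1),\dots,f(y_n))\colon B\to A^n$ also factors through $r$. $\mathbb{C}$ has $M$-closed relations if every internal $n$-ary relation in $\mathbb{C}$ is $M$-closed. For simple extended matrices $M_1,M_2$, $M_1\Rightarrow_{\mathsf{lex}}M_2$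 means: every finitely complete category with $M_1$-closed relations has $M_2$-closed relations. For integers $n,k\geq 2$, $\mathsf{Cube}_{n,k}$ is the simple extended matrix with $n$ rows and variables $\{x_1,\dots,x_k\}$ whose $k^n-1$ left columns are all the $n$-tuples of elements of $\{x_1,\dots,x_k\}$ except $(x_1,\dots,x_1)$ (in lexicographic order), and whose right column is $(x_1,\dots,x_1)$. *)

From mathcomp Require Import all_boot.
Set Implicit Arguments. Unset Strict Implicit. Unset Printing Implicit Defensive.

Record Category := {
  Obj :> Type;
  Hom : Obj -> Obj -> Type;
  idm : forall X, Hom X X;
  comp : forall X Y Z, Hom Y Z -> Hom X Y -> Hom X Z;  (* comp g f = g o f *)
  comp_assoc : forall X Y Z W (f : Hom X Y) (g : Hom Y Z) (h : Hom Z W),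
      comp h (comp g f) = comp (comp h g) f;
  comp_idl : forall X Y (f : Hom X Y), comp (idm Y) f = f;
  comp_idr : forall X Y (f : Hom X Y), comp f (idm X) = f }.

Arguments Hom {C} X Y : rename.
Arguments idm {C} X : rename.
Arguments comp {C X Y Z} g f : rename.

Definition is_mono (C : Category) (X Y : C) (r : Hom X Y) : Prop :=
  forall (Z : C) (g h : Hom Z X), comp r g = comp r h -> g = h.

Definition is_terminal (C : Category) (T : C) : Prop :=
  forall X : C, exists u : Hom X T, forall v : Hom X T, v = u.

Definition is_binary_product (C : Category) (A B P : C)
  (p1 : Hom P A) (p2 : Hom P B) : Prop :=
  forall (X : C) (f : Hom X A) (g : Hom X B),
    exists u : Hom X P, (comp p1 u = f /\ comp p2 u = g) /\
      forall v : Hom X P, comp p1 v = f -> comp p2 v = g -> v = u.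

Definition is_equalizer (C : Category) (A B E : C) (f g : Hom A B)
  (e : Hom E A) : Prop :=
  comp f e = comp g e /\
  forall (X : C) (h : Hom X A), comp f h = comp g h ->
    exists u : Hom X E, comp e u = h /\ forall v : Hom X E, comp e v = h -> v = u.

(* Finitely complete: terminal object, binary products and equalizers
   (the standard equivalent of having all finite limits). *)
Definition finitely_complete (C : Category) : Prop :=
  (exists T : C, is_terminal T) /\
  (forall A B : C, exists (P : C) (p1 : Hom P A) (p2 : Hom P B),
      is_binary_product p1 p2) /\
  (forall (A B : C) (f g : Hom A B), exists (E : C) (e : Hom E A),
      is_equalizer f g e).

Definition is_power (C : Category) (n : nat) (A P : C) (p : 'I_n -> Hom P A) : Prop :=
  forall (X : C) (h : 'I_n -> Hom X A),
    exists u : Hom X P, (forall i, comp (p i) u = h i) /\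
      forall v : Hom X P, (forall i, comp (p i) v = h i) -> v = u.

(* n rows, m left columns, variables x_1..x_k indexed by 'I_k (x_1 = ord 0). *)
Record sem (n m k : nat) := SEM {
  sem_left : 'I_n -> 'I_m -> 'I_k;
  sem_right : 'I_n -> 'I_k }.

(* The morphism B -> A^n with components h i factors through r : R -> A^n
   (written out via the universal property of the power (P, p)). *)
Definition factors_through (C : Category) (n : nat) (A P R B : C)
  (p : 'I_n -> Hom P A) (r : Hom R P) (h : 'I_n -> Hom B A) : Prop :=
  exists g : Hom B R, forall i, comp (p i) (comp r g) = h i.

Definition M_closed (C : Category) (n m k : nat) (M : sem n m k)
  (A P R : C) (p : 'I_n -> Hom P A) (r : Hom R P) : Prop :=
  forall (B : C) (f : 'I_k -> Hom B A),
    (forall j : 'I_m, factors_through p r (fun i => f (sem_left M i j))) ->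
    factors_through p r (fun i => f (sem_right M i)).

Definition has_M_closed_relations (C : Category) (n m k : nat) (M : sem n m k) : Prop :=
  forall (A P : C) (p : 'I_n -> Hom P A), is_power p ->
  forall (R : C) (r : Hom R P), is_mono r -> M_closed M p r.

Definition lex_implies (n1 m1 k1 n2 m2 k2 : nat)
  (M1 : sem n1 m1 k1) (M2 : sem n2 m2 k2) : Prop :=
  forall C : Category, finitely_complete C ->
    has_M_closed_relations C M1 -> has_M_closed_relations C M2.

(* Left column j (0-based) is the (j+1)-th n-tuple in lexicographic order over
   x_1 < ... < x_k, i.e. row i holds the base-k digit of j+1 of weight
   k^(n-1-i); tuple number 0 = (x_1,...,x_1) is omitted and is the right column. *)
Definition cube_entry (n k : nat) (Hk : 0 < k) (i : 'I_n) (j : 'I_(k ^ n - 1)) : 'I_k :=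
  Ordinal (ltn_pmod ((j.+1) %/ k ^ (n - 1 - i)) Hk).

Definition Cube (n k : nat) (Hk : 0 < k) : sem n (k ^ n - 1) k :=
  @SEM n (k ^ n - 1) k (fun i j => @cube_entry n k Hk i j) (fun _ => Ordinal Hk).
Arguments Cube n {k} Hk.

(* Sufficiency holds in every finitely complete category.  Given a relation
   r >-> A^n', the relation on (A^n')^n of tuples whose "diagonal" along idx
   lies in r is again a relation (a pullback of r), hence M-closed; evaluating M
   there at suitable tuples built from a Cube-closedness instance shows that r
   is Cube-closed.  The Cube columns enter through base-k' digit arithmetic.

   Necessity is proved by a counterexample: if every choice of n' rows is
   covered by a left column, then in the category of algebras with an
   (n'+1)-ary near-unanimity operation every relation is M-closed (by the
   Baker-Pixley argument), whereas the nonzero vectors of bool^n', under the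
   operation "at least two arguments are true", are not Cube-closed. *)

From Pilot Require Import Defs.
From mathcomp Require Import all_boot zify.
From Stdlib Require Import Classical ProofIrrelevance FunctionalExtensionality IndefiniteDescription.
Set Implicit Arguments. Unset Strict Implicit. Unset Printing Implicit Defensive.

(* [all_boot] re-exports ssrfun's function composition [comp]; [cmp] names the
   categorical composition of Defs. *)
Notation cmp := Defs.comp.

(* The i-th of the n base-k digits of N, most significant first: left column j
   of Cube_{n,k} is the digit string of j+1. *)
Definition digit (k n N : nat) (i : 'I_n) : nat := N %/ k ^ (n - 1 - i) %% k.
Arguments digit : clear implicits.

Lemma digit_snoc (k n N c : nat) (hc : c < k) (i : 'I_n) :
  digit k n.+1 (N * k + c) (widen_ord (leqnSn n) i) = digit k n N i.
Proof.
have hk : 0 < k by apply: leq_ltn_trans hc.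
rewrite /digit /=; have -> : n.+1 - 1 - i = (n - 1 - i).+1 by have := ltn_ord i; lia.
by rewrite expnS divnMA divnMDl // (divn_small hc) addn0.
Qed.

Lemma digits_exist (k n : nat) (c : 'I_n -> nat) (hc : forall i, c i < k) :
  0 < k -> exists2 N, N < k ^ n & forall i : 'I_n, digit k n N i = c i.
Proof.
elim: n c hc => [|n IH] c hc hk; first by exists 0 => // -[].
have [N HN HNi] := IH (fun i => c (widen_ord (leqnSn n) i)) (fun i => hc _) hk.
exists (N * k + c ord_max).
  by rewrite expnSr; have := hc ord_max; move: HN; set K := k ^ n; nia.
move=> i; have [/eqP Ei|Hi] := boolP (val i == n).
  have -> : i = ord_max by apply: val_inj.
  by rewrite /digit /= subn1 /= subnn expn0 divn1 modnMDl modn_small.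
have Hin : i < n by rewrite ltn_neqAle Hi -ltnS ltn_ord.
have -> : i = widen_ord (leqnSn n) (Ordinal Hin) by apply: val_inj.
by rewrite digit_snoc // HNi.
Qed.

Lemma digits_nonzero (k n N : nat) : 0 < k -> N < k ^ n -> 0 < N ->
  exists i : 'I_n, digit k n N i != 0.
Proof.
move=> hk; elim: n N => [|n IH] N; first by rewrite expn0 ltnS leqn0 => /eqP ->.
move=> HN HN0; have [Hm|Hm] := eqVneq (N %% k) 0; last first.
  by exists ord_max; rewrite /digit /= subn1 /= subnn expn0 divn1.
have HNe : N = N %/ k * k + 0 by rewrite {1}(divn_eq N k) Hm.
have [||i Hi] := IH (N %/ k); first by rewrite ltn_divLR // -expnSr.
  by move: HN0; rewrite {1}HNe addn0 muln_gt0 => /andP[].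
by exists (widen_ord (leqnSn n) i); rewrite HNe digit_snoc.
Qed.

Lemma cube_column_nonzero (n k : nat) (hk : 0 < k) (j : 'I_(k ^ n - 1)) :
  exists i : 'I_n, val (cube_entry hk i j) != 0.
Proof.
have hj : j.+1 < k ^ n.
  have : 0 < k ^ n by rewrite expn_gt0 hk.
  by have := ltn_ord j; lia.
exact: digits_nonzero hk hj (ltn0Sn _).
Qed.

Lemma cube_column_exists (n k : nat) (hk : 0 < k) (c : 'I_n -> 'I_k) :
  (exists a, val (c a) != 0) -> exists j : 'I_(k ^ n - 1), forall a, cube_entry hk a j = c a.
Proof.
case=> a0 Ha0.
have [N HN HNc] := digits_exist (fun a => ltn_ord (c a)) hk.
have N0 : 0 < N.
  case: N HN HNc => // _ HNc; move: Ha0 (HNc a0) => /= Hc0.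
  by rewrite /digit div0n mod0n => E; rewrite -E in Hc0.
have Hj : N.-1 < k ^ n - 1 by lia.
by exists (Ordinal Hj) => a; apply: val_inj; rewrite /= prednK // -[RHS]HNc.
Qed.

Section FinitelyComplete.
Variables (C : Category) (hC : finitely_complete C).

Lemma power_unique (n : nat) (A P : C) (p : 'I_n -> Hom P A) (Hp : is_power p)
  (X : C) (x y : Hom X P) : (forall i, cmp (p i) x = cmp (p i) y) -> x = y.
Proof.
move=> Hxy; have [u [_ Hu]] := Hp X (fun i => cmp (p i) y).
by rewrite (Hu x Hxy) (Hu y (fun _ => erefl)).
Qed.

Lemma power_tuple (n : nat) (A P : C) (p : 'I_n -> Hom P A) (Hp : is_power p)
  (X : C) (h : 'I_n -> Hom X A) : exists u : Hom X P, forall i, cmp (p i) u = h i.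
Proof. by have [u [Hu _]] := Hp X h; exists u. Qed.

(* Finite powers exist: A^0 is terminal and A^(n+1) = A^n x A. *)
Lemma power_exists (n : nat) (A : C) : exists (P : C) (p : 'I_n -> Hom P A), is_power p.
Proof.
case: hC => [[T HT] [Hprod _]].
elim: n => [|n [Q [q Hq]]].
  exists T, (fun i : 'I_0 => False_rect _ (notF (ltn_ord i))) => X h.
  by have [u Hu] := HT X; exists u; split => // -[].
have [P [p1 [p2 Hpr]]] := Hprod Q A.
exists P, (fun i => if unlift ord_max i is Some i' then cmp (q i') p1 else p2).
move=> X h.
have [u' [Hu'1 Hu'2]] := Hq X (fun i' => h (lift ord_max i')).
have [u [[Hu1 Hu2] Hu]] := Hpr X u' (h ord_max).
exists u; split.
  move=> i; case: (unliftP ord_max i) => [i'|] ->; last by rewrite ?unlift_none.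
  by rewrite ?liftK -comp_assoc Hu1 Hu'1.
move=> v Hv; apply: Hu; last by have := Hv ord_max; rewrite ?unlift_none.
by apply: Hu'2 => i'; have := Hv (lift ord_max i'); rewrite ?liftK -comp_assoc.
Qed.

(* The pullback of a mono r along phi (built from a product and an equalizer) is
   a mono t, and w factors through t iff phi o w factors through r. *)
Lemma pullback_mono (R P Q : C) (r : Hom R P) (phi : Hom Q P) : is_mono r ->
  exists (T : C) (t : Hom T Q), is_mono t /\
    forall (Y : C) (w : Hom Y Q),
      (exists g, cmp r g = cmp phi w) <-> (exists v, cmp t v = w).
Proof.
case: hC => [_ [Hprod Heq]] Hr.
have [S [p1 [p2 Hpr]]] := Hprod R Q.
have [T [e [He1 He2]]] := Heq S P (cmp r p1) (cmp phi p2).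
have square : forall Z (x : Hom Z T),
    cmp r (cmp p1 (cmp e x)) = cmp phi (cmp (cmp p2 e) x).
  by move=> Z x; rewrite !comp_assoc He1.
exists T, (cmp p2 e); split.
  move=> Z g h Hgh.
  have E1 : cmp p1 (cmp e g) = cmp p1 (cmp e h) by apply: Hr; rewrite !square Hgh.
  have E2 : cmp p2 (cmp e g) = cmp p2 (cmp e h) by rewrite !comp_assoc.
  have [u [_ Hu]] := Hpr Z (cmp p1 (cmp e h)) (cmp p2 (cmp e h)).
  have Eeg : cmp e g = cmp e h by rewrite (Hu _ E1 E2) (Hu _ erefl erefl).
  have Heh : cmp (cmp r p1) (cmp e h) = cmp (cmp phi p2) (cmp e h).
    by rewrite !comp_assoc He1.
  have [u2 [_ Hu2]] := He2 Z (cmp e h) Heh.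
  by rewrite (Hu2 g Eeg) (Hu2 h erefl).
move=> Y w; split; last by case=> v <-; exists (cmp p1 (cmp e v)); rewrite square.
case=> g Hg; have [u [[Hu1 Hu2] _]] := Hpr Y g w.
have [|v [Hv _]] := He2 Y u; first by rewrite -!comp_assoc Hu1 Hu2.
by exists v; rewrite -comp_assoc Hv.
Qed.

(* Reindexing a relation r >-> A^n' along idx : 'I_n' -> 'I_n gives a relation
   t >-> (A^n')^n consisting of the tuples (z_1, ..., z_n) whose "diagonal"
   (z_(idx a))_a, the a-th component taken from z_(idx a), lies in r. *)
Lemma reindexed_relation (n n' : nat) (A P R : C) (p : 'I_n' -> Hom P A)
  (Hp : is_power p) (r : Hom R P) (Hr : is_mono r) (idx : 'I_n' -> 'I_n)
  (P' : C) (q : 'I_n -> Hom P' P) (Hq : is_power q) :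
  exists (T : C) (t : Hom T P'), is_mono t /\
    forall (B : C) (h : 'I_n -> Hom B P),
      factors_through q t h <-> factors_through p r (fun a => cmp (p a) (h (idx a))).
Proof.
have [phi Hphi] := power_tuple Hp (fun a => cmp (p a) (q (idx a))).
have [T [t [Ht Hpb]]] := pullback_mono phi Hr.
exists T, t; split => // B h.
have [w Hw] := power_tuple Hq h.
have Ephi : forall a, cmp (p a) (cmp phi w) = cmp (p a) (h (idx a)).
  by move=> a; rewrite comp_assoc Hphi -comp_assoc Hw.
split.
- case=> v Hv; have [|g Hg] := (Hpb B w).2.
    by exists v; apply: (power_unique Hq) => i; rewrite Hv Hw.
  by exists g => a; rewrite Hg Ephi.
- case=> g Hg; have [|v Hv] := (Hpb B w).1.
    by exists g; apply: (power_unique Hp) => a; rewrite Hg Ephi.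
  by exists v => i; rewrite Hv Hw.
Qed.

End FinitelyComplete.

(* Given a relation r on A^n' and
   f : {x_1,...,x_k'} -> C(B,A) sending every Cube column into r, evaluate M in
   the reindexed relation t at G v = (f (d v a))_a, where d v a = x_1 if
   v = y_(idx a) and x_2 otherwise: the diagonal of each left column of M is a
   tuple other than (x_1,...,x_1), hence a Cube column, while that of the right
   column is (f x_1, ..., f x_1). *)
Lemma lex_implies_cube (n m k : nat) (M : sem n m k) (n' k' : nat) (hk' : 1 < k')
  (idx : 'I_n' -> 'I_n)
  (Hidx : ~ exists j : 'I_m, forall a, sem_left M (idx a) j = sem_right M (idx a)) :
  lex_implies M (Cube n' (ltnW hk')).
Proof.
move=> C hC HM A P p Hp R r Hr B f Hcols.
have [P' [q Hq]] := power_exists hC n P.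
have [T [t [Ht HT]]] := reindexed_relation hC Hp Hr idx Hq.
pose d (v : 'I_k) (a : 'I_n') : 'I_k' :=
  if v == sem_right M (idx a) then Ordinal (ltnW hk') else Ordinal hk'.
have [G HG] : exists G : 'I_k -> Hom B P, forall v a, cmp (p a) (G v) = f (d v a).
  exact: fin_all_exists (fun v => power_tuple Hp (fun a => f (d v a))).
have HTG : forall s : 'I_n -> 'I_k, factors_through q t (fun i => G (s i)) <->
    factors_through p r (fun a => f (d (s (idx a)) a)).
  move=> s; rewrite (_ : (fun a => _) = fun a => cmp (p a) (G (s (idx a)))) //.
  by apply: functional_extensionality => a; rewrite HG.
have Hcol : forall j, factors_through q t (fun i => G (sem_left M i j)).
  move=> j; apply/HTG.
  have [a Ha] : exists a, sem_left M (idx a) j != sem_right M (idx a).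
    apply/existsP; apply: contraT; rewrite negb_exists => /forallP Hall.
    by case: Hidx; exists j => a; apply/eqP; move: (Hall a); rewrite negbK.
  have [|c Hc] := @cube_column_exists n' k' (ltnW hk') (fun a => d (sem_left M (idx a) j) a).
    by exists a; rewrite /d (negbTE Ha).
  by have [g Hg] := Hcols c; exists g => b; rewrite Hg /= Hc.
have [g Hg] := (HTG (sem_right M)).1 (HM P P' q Hq T t Ht B G Hcol).
by exists g => a; rewrite Hg /d eqxx.
Qed.

Lemma sig_eq (T : Type) (P : T -> Prop) (a b : sig P) :
  proj1_sig a = proj1_sig b -> a = b.
Proof. by apply: eq_sig_hprop => x; exact: proof_irrelevance. Qed.

(* The counterexample category: algebras with one (d+1)-ary near-unanimity
   operation, i.e. nop u = x whenever all arguments but possibly one equal x. *)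
Section NearUnanimity.
Variable d : nat.

Record nualg := NUAlg {
  ncar :> Type;
  nop : ('I_d.+1 -> ncar) -> ncar;
  nop_nu : forall (u : 'I_d.+1 -> ncar) (l : 'I_d.+1) (x : ncar),
             (forall i, i != l -> u i = x) -> nop u = x }.

Record nhom (X Y : nualg) := NHom {
  happ :> X -> Y;
  happ_nop : forall u, happ (nop u) = nop (fun l => happ (u l)) }.

Lemma nhom_eq (X Y : nualg) (g h : nhom X Y) : (forall x, g x = h x) -> g = h.
Proof.
case: g h => [g Hg] [h Hh] /= E.
have E' : g = h by apply: functional_extensionality.
by subst h; congr NHom; apply: proof_irrelevance.
Qed.

Definition nid (X : nualg) : nhom X X := @NHom X X id (fun u => erefl).

Definition ncomp (X Y Z : nualg) (g : nhom Y Z) (f : nhom X Y) : nhom X Z.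
Proof. by exists (fun x => g (f x)) => u; rewrite !happ_nop. Defined.

Definition NUcat : Category.
Proof.
by refine (@Build_Category nualg nhom nid ncomp _ _ _) => *; apply: nhom_eq.
Defined.

Definition unitalg : nualg := @NUAlg unit (fun _ => tt) (fun _ _ x _ => match x with tt => erefl end).

Lemma unitalg_terminal : @is_terminal NUcat unitalg.
Proof.
move=> X; exists (@NHom X unitalg (fun _ => tt) (fun _ => erefl)).
by move=> v; apply: nhom_eq => x; case: (happ v x).
Qed.

Definition prodalg (X Y : nualg) : nualg.
Proof.
exists (X * Y)%type (fun u => (nop (fun l => (u l).1), nop (fun l => (u l).2))).
by move=> u l [x y] Hu; rewrite (nop_nu (l:=l) (x:=x)) ?(nop_nu (l:=l) (x:=y)) // => i /Hu ->.
Defined.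

Lemma prodalg_product (X Y : nualg) :
  exists (p1 : nhom (prodalg X Y) X) (p2 : nhom (prodalg X Y) Y),
    @is_binary_product NUcat X Y (prodalg X Y) p1 p2.
Proof.
exists (@NHom (prodalg X Y) X fst (fun u => erefl)).
exists (@NHom (prodalg X Y) Y snd (fun u => erefl)) => Z f g.
have Hfg : forall u, (f (nop u), g (nop u)) =
    @nop (prodalg X Y) (fun l => (f (u l), g (u l))) by move=> u; rewrite !happ_nop.
exists (@NHom Z (prodalg X Y) (fun z => (f z, g z)) Hfg).
split; first by split; apply: nhom_eq.
move=> v Hv1 Hv2; apply: nhom_eq => z /=.
by rewrite -Hv1 -Hv2 /=; case: (happ v z).
Qed.

Section Subalgebra.
Variables (X : nualg) (S : X -> Prop).
Hypothesis S_nop : forall u, (forall l, S (u l)) -> S (nop u).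

Definition subop (u : 'I_d.+1 -> {x | S x}) : {x | S x} :=
  exist S (nop (fun l => proj1_sig (u l))) (S_nop (fun l => proj2_sig (u l))).

Lemma subop_nu (u : 'I_d.+1 -> {x | S x}) (l : 'I_d.+1) (x : {x | S x}) :
  (forall i, i != l -> u i = x) -> subop u = x.
Proof. by move=> Hu; apply: sig_eq => /=; apply: (nop_nu (l:=l)) => i /Hu ->. Qed.

Definition subalg : nualg := @NUAlg {x | S x} subop subop_nu.

Definition subincl : nhom subalg X := @NHom subalg X (@proj1_sig _ _) (fun u => erefl).

Lemma subincl_mono : @is_mono NUcat subalg X subincl.
Proof.
move=> Z g h E; apply: nhom_eq => z; apply: sig_eq.
exact: (congr1 (fun k : nhom Z X => k z) E).
Qed.

End Subalgebra.

Lemma agree_nop (X Y : nualg) (f g : nhom X Y) (u : 'I_d.+1 -> X) :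
  (forall l, f (u l) = g (u l)) -> f (nop u) = g (nop u).
Proof. by move=> Hu; rewrite !happ_nop; congr nop; apply: functional_extensionality. Qed.

Definition eqalg (X Y : nualg) (f g : nhom X Y) : nualg :=
  @subalg X (fun x => f x = g x) (@agree_nop X Y f g).

Lemma eqalg_equalizer (X Y : nualg) (f g : nhom X Y) :
  exists e : nhom (eqalg f g) X, @is_equalizer NUcat X Y (eqalg f g) f g e.
Proof.
exists (@subincl X (fun x => f x = g x) (@agree_nop X Y f g)).
split; first by apply: nhom_eq => -[x Hx].
move=> Z h Hh.
have Hx : forall z, f (h z) = g (h z) by move=> z; exact: (congr1 (fun k : nhom Z Y => happ k z) Hh).
have Hhom : forall u, (exist _ (h (nop u)) (Hx (nop u)) : eqalg f g) =
    nop (fun l => (exist _ (h (u l)) (Hx (u l)) : eqalg f g)).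
  by move=> u; apply: sig_eq => /=; rewrite happ_nop.
exists (@NHom Z (eqalg f g) (fun z => exist _ (h z) (Hx z)) Hhom); split; first by apply: nhom_eq.
by move=> v Hv; apply: nhom_eq => z; apply: sig_eq; rewrite /= -Hv.
Qed.

Lemma NUcat_finitely_complete : finitely_complete NUcat.
Proof.
split; first by exists unitalg; exact: unitalg_terminal.
split; first by move=> X Y; exists (prodalg X Y); exact: prodalg_product.
by move=> X Y f g; exists (eqalg f g); exact: eqalg_equalizer.
Qed.

Definition funalg (I : Type) (X : nualg) : nualg.
Proof.
exists (I -> X) (fun u i => nop (fun l => u l i)).
move=> u l x Hu; apply: functional_extensionality => i.
by apply: (nop_nu (l:=l)) => j /Hu ->.
Defined.

Definition evalhom (I : Type) (X : nualg) (i : I) : nhom (funalg I X) X :=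
  @NHom (funalg I X) X (fun v => v i) (fun u => erefl).

Lemma funalg_power (n : nat) (X : nualg) :
  @is_power NUcat n X (funalg 'I_n X) (@evalhom 'I_n X).
Proof.
move=> Z h.
have Hh : forall u, (fun i => h i (nop u)) =
    @nop (funalg 'I_n X) (fun l i => h i (u l)).
  by move=> u; apply: functional_extensionality => i; rewrite happ_nop.
exists (@NHom Z (funalg 'I_n X) (fun z i => h i z) Hh); split.
  by move=> i; apply: nhom_eq.
move=> v Hv; apply: nhom_eq => z /=; apply: functional_extensionality => i.
exact: (congr1 (fun g : nhom Z X => g z) (Hv i)).
Qed.

End NearUnanimity.

(* Baker-Pixley, in the form needed here: let op be a (d+1)-ary near-unanimity
   operation on X, and phi : Rt -> X^n a map commuting with op (coordinatewise
   on X^n).  If a tuple t agrees with some phi rho on every d coordinates, then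
   t = phi rho for a single rho. *)
Section BakerPixley.
Variables (d n : nat) (X : Type) (op : ('I_d.+1 -> X) -> X).
Hypothesis op_nu : forall (u : 'I_d.+1 -> X) (l : 'I_d.+1) (x : X),
  (forall i, i != l -> u i = x) -> op u = x.
Variables (Rt : Type) (opR : ('I_d.+1 -> Rt) -> Rt) (phi : Rt -> 'I_n -> X).
Hypothesis phi_hom : forall w i, phi (opR w) i = op (fun l => phi (w l) i).
Variables (t : 'I_n -> X) (i0 : 'I_n).
Hypothesis t_local : forall idx : 'I_d -> 'I_n,
  exists rho, forall a, phi rho (idx a) = t (idx a).

Definition agrees_on (K : {set 'I_n}) : Prop :=
  exists rho, forall i, i \in K -> phi rho i = t i.

(* At most d coordinates can be listed by a map 'I_d -> 'I_n. *)
Lemma agrees_on_small (K : {set 'I_n}) : #|K| <= d -> agrees_on K.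
Proof.
move=> HK; have [rho Hrho] := t_local (fun a => nth i0 (enum K) a).
exists rho => i iK.
have Ha : index i (enum K) < d by rewrite (leq_trans _ HK) // cardE index_mem mem_enum.
by have := Hrho (Ordinal Ha); rewrite /= nth_index // mem_enum.
Qed.

(* If K has more than d elements, apply opR to witnesses for K minus each of
   d+1 distinct elements k_l of K: at any i in K all witnesses but the one
   for k_l = i agree with t, so near-unanimity gives t i. *)
Lemma agrees_on_step (K : {set 'I_n}) : d < #|K| ->
  (forall i, i \in K -> agrees_on (K :\ i)) -> agrees_on K.
Proof.
move=> HKd HK; pose kk (l : 'I_d.+1) := nth i0 (enum K) l.
have kk_size : forall l : 'I_d.+1, l < size (enum K).
  by move=> l; rewrite -cardE; exact: leq_trans (ltn_ord l) HKd.
have kkK : forall l, kk l \in K by move=> l; rewrite -mem_enum mem_nth.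
have [rhos Hrhos] := fin_all_exists (fun l => HK _ (kkK l)).
exists (opR rhos) => i iK; rewrite phi_hom.
apply: (op_nu (l := inord (index i (enum K)))) => l Hl; apply: Hrhos.
rewrite in_setD1 iK andbT; apply: contra Hl => /eqP ->.
by rewrite /kk index_uniq ?enum_uniq ?inord_val.
Qed.

Lemma baker_pixley : exists rho, forall i, phi rho i = t i.
Proof.
suff agree_all : forall s (K : {set 'I_n}), #|K| <= s -> agrees_on K.
  have [|rho Hrho] := agree_all n setT; first by rewrite cardsT card_ord.
  by exists rho => i; apply: Hrho; rewrite in_setT.
elim=> [|s IH] K HK; first exact: agrees_on_small (leq_trans HK (leq0n d)).
have [HKd|HKd] := leqP #|K| d; first exact: agrees_on_small.
apply: agrees_on_step HKd _ => i iK; apply: IH.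
by move: HK; rewrite (cardsD1 i K) iK.
Qed.
End BakerPixley.

Section NUClosed.
Variable d : nat.

(* Elements of X are the morphisms from the one-point algebra. *)
Definition point (X : nualg d) (x : X) : nhom (unitalg d) X.
Proof. by exists (fun _ => x) => u; symmetry; apply: (nop_nu (l := ord0)). Defined.

Lemma point_eq (X : nualg d) (x y : X) : point x = point y -> x = y.
Proof. by move/(congr1 (fun h : nhom (unitalg d) X => h tt)). Qed.

(* Hence monos of NUcat are injective ... *)
Lemma mono_injective (X Y : nualg d) (r : nhom X Y) : @is_mono (NUcat d) X Y r ->
  forall a b, r a = r b -> a = b.
Proof. by move=> Hr a b E; apply: point_eq; apply: Hr; apply: nhom_eq => -[] /=. Qed.

Lemma power_elements (n : nat) (A P : nualg d) (p : 'I_n -> nhom P A)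
  (Hp : @is_power (NUcat d) n A P p) (a b : P) :
  (forall i, p i a = p i b) -> a = b.
Proof.
move=> Hab; apply: point_eq; apply: (power_unique Hp) => i.
by apply: nhom_eq => -[]; exact: Hab.
Qed.

(* If every choice of d rows of M has a left column equal to the right column
   on those rows, every relation of NUcat is M-closed: pointwise, the right
   column agrees with an element of the relation on any d coordinates, so by
   Baker-Pixley it lies in the relation, and the choice of preimages is a
   homomorphism because r is injective. *)
Lemma NU_M_closed (n m k : nat) (M : sem n m k) (hn : 0 < n)
  (Hcov : forall idx : 'I_d -> 'I_n, exists j : 'I_m,
     forall a, sem_left M (idx a) j = sem_right M (idx a)) :
  has_M_closed_relations (NUcat d) M.
Proof.
move=> A P p Hp R r Hr B f Hcols.
have Hb : forall b : B, exists rho : R, forall i, p i (r rho) = f (sem_right M i) b.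
  move=> b.
  apply: (@baker_pixley d n A (@nop d A) (@nop_nu d A) R (@nop d R)
            (fun rho i => p i (r rho)) _ _ (Ordinal hn)).
    by move=> w i /=; rewrite !happ_nop.
  move=> idx; have [j Hj] := Hcov idx; have [g Hg] := Hcols j.
  exists (g b) => a; rewrite -Hj.
  exact: (congr1 (fun h : nhom B A => h b) (Hg (idx a))).
have [G HG] : exists G : B -> R, forall b i, p i (r (G b)) = f (sem_right M i) b.
  exact: functional_choice Hb.
have G_nop : forall u, G (nop u) = nop (fun l => G (u l)).
  move=> u; apply: (mono_injective Hr); apply: (power_elements Hp) => i.
  rewrite HG !happ_nop; congr nop; apply: functional_extensionality => l.
  by rewrite HG.
by exists (NHom G_nop) => i; apply: nhom_eq => b /=; exact: HG.
Qed.

End NUClosed.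

(* For d >= 2, "at least two of the d+1 arguments are
   true" is a near-unanimity operation on bool, and the nonzero vectors of
   bool^d form a subalgebra by the pigeonhole principle.  This relation is not
   Cube_{d,k}-closed: evaluated at c |-> (c != x_1) each left column of the cube
   is a nonzero vector, but the right column is the zero vector. *)
Section Counterexample.
Variables (d : nat) (hd : 1 < d).

Definition at_least_two (u : 'I_d.+1 -> bool) : bool := 1 < #|[set l | u l]|.

Lemma at_least_two_nu (u : 'I_d.+1 -> bool) (l : 'I_d.+1) (x : bool) :
  (forall i, i != l -> u i = x) -> at_least_two u = x.
Proof.
rewrite /at_least_two; case: x => Hu.
  apply: (@leq_trans #|predC1 l|); first by rewrite cardC1 card_ord.
  by apply: subset_leq_card; apply/subsetP => i /= Hi; rewrite inE Hu.
apply/negbTE; rewrite -leqNgt.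
apply: (@leq_trans #|pred1 l|); last by rewrite card1.
apply: subset_leq_card; apply/subsetP => i; rewrite inE => Hi.
by rewrite !inE; apply/negPn/negP => /Hu; rewrite Hi.
Qed.

Definition boolalg : nualg d := NUAlg at_least_two_nu.

Definition nonzero (v : 'I_d -> bool) : Prop := exists i, v i.

(* d+1 nonzero vectors of length d share a true coordinate. *)
Lemma nonzero_closed (u : 'I_d.+1 -> funalg 'I_d boolalg) :
  (forall l, nonzero (u l)) -> nonzero (nop u).
Proof.
move=> Hu; have [c Hc] := fin_all_exists Hu.
have : ~~ injectiveb c.
  by apply/negP => /injectiveP/leq_card; rewrite !card_ord ltnn.
case/injectivePn => l1 [l2 Hne Heq]; exists (c l1).
apply: (@leq_trans #|[set l1; l2]|); first by rewrite cards2 Hne.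
apply: subset_leq_card; apply/subsetP => l; rewrite !inE.
by case/orP => /eqP ->; [exact: Hc | rewrite Heq; exact: Hc].
Qed.

Lemma NU_not_cube (k : nat) (hk : 1 < k) :
  ~ has_M_closed_relations (NUcat d) (Cube d (ltnW hk)).
Proof.
move=> HC.
pose f (c : 'I_k) : nhom (unitalg d) boolalg := point (X := boolalg) (val c != 0).
have [|g Hg] := HC _ _ _ (@funalg_power d d boolalg) _ _ (subincl_mono (S_nop := nonzero_closed))
                   (unitalg d) f.
  move=> j.
  have Hj : nonzero (fun i => val (cube_entry (ltnW hk) i j) != 0).
    by have [i Hi] := cube_column_nonzero (ltnW hk) j; exists i.
  by exists (point (X := subalg nonzero_closed) (exist _ _ Hj)) => i; apply: nhom_eq.
have [i Hi] := proj2_sig (g tt).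
by have := congr1 (fun h : nhom (unitalg d) boolalg => h tt) (Hg i); rewrite /= Hi.
Qed.

End Counterexample.

Theorem proposition2p1 (n m k : nat) (M : sem n m k) (hn : 0 < n) (hk : 0 < k)
  (n' k' : nat) (hn' : 2 <= n') (hk' : 2 <= k') :
  lex_implies M (Cube n' (ltnW hk' : 0 < k')) <->
  exists idx : 'I_n' -> 'I_n,
    ~ (exists j : 'I_m, forall a : 'I_n', sem_left M (idx a) j = sem_right M (idx a)).
Proof.
split=> [Hlex|[idx Hidx]]; last exact: lex_implies_cube Hidx.
apply: NNPP => Hnone.
have Hcov : forall idx : 'I_n' -> 'I_n,
    exists j : 'I_m, forall a, sem_left M (idx a) j = sem_right M (idx a).
  by move=> idx; apply: NNPP => Hidx; apply: Hnone; exists idx.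
apply: (@NU_not_cube n' hn' k' hk'); apply: Hlex; first exact: NUcat_finitely_complete.
exact: NU_M_closed hn Hcov.
Qed.
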